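(* Let $(X,\mathcal A,\mu,\mu^{\otimes2},R,I,\Pi_R,G,E_0,\eta)$ be a pre-structural datum satisfying Axioms I and II, with $\mu(X)\le M<\infty$, and let $\eta\in[0,1)$. Let $\mathcal B$ be the Banach space of bounded finitely additive real-valued set functions $f:\mathcal A\to\mathbb R$ with norm $\|f\|_\infty=\sup_{B\in\mathcal A}|f(B)|$, and define $T_\eta:\mathcal B\to\mathcal B$ by $(T_\eta f)(B)=\mu(B)+\eta\,f(\Pi_R^{-1}(B))$ for $B\in\mathcal A$. Then the equation $f=T_\eta f$ has a unique solution $f_*\in\mathcal B$, given by \[f_*(B)=\mu(B)+\frac{\eta}{1-\eta}\,\mu(\Pi_R^{-1}(B))\qquad(B\in\mathcal A).\] Moreover $f_*\ge 0$ on $\mathcal A$, and for every $f_0\in\mathcal B$ the iterates $f_n:=T_\eta^n f_0$ satisfy $\|f_n-f_*\|_\infty\le\eta^n\|f_0-f_*\|_\infty$, so $f_n\to f_*$ in norm.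
   Context: For a nonempty set $X$, an algebra $\mathcal A\subseteq\mathcal P(X)$ contains $\varnothing,X$ and is closed under finite unions and complements. A finitely additive measure $\mu:\mathcal A\to[0,\infty)$ satisfies $\mu(\varnothing)=0$ and $\mu(B_1\sqcup B_2)=\mu(B_1)+\mu(B_2)$ for disjoint $B_1,B_2\in\mathcal A$. $\mathcal A\otimes\mathcal A$ denotes the algebra generated by rectangles $B_1\times B_2$, $B_i\in\mathcal A$. For relations $H,K\subseteq X\times X$, $H\circ K=\{(x,z):\exists y\,(x,y)\in H,(y,z)\in K\}$. A pre-structural datum is a tuple $(X,\mathcal A,\mu,\mu^{\otimes2},R,I,\Pi_R,G,E_0,\eta)$ where: $X$ nonempty; $\mathcal A$ an algebra on $X$; $\mu$ a finitely additive measure on $\mathcal A$; $\mu^{\otimes2}:\mathcal A\otimes\mathcal A\to[0,\infty)$ finitely additive with $\mu^{\otimes2}(B_1\times B_2)=\mu(B_1)\mu(B_2)$; $R,I\in\mathcal A$ disjoint; $\Pi_R:X\to R$ a map; $G\in\mathcal A\otimes\mathcal A$; $E_0\in(0,\infty)$; $\eta\in[0,1]$. Axiom I: $\Pi_R\circ\Pi_R=\Pi_R$, $\Pi_R(r)=r$ for all $r\in R$, and $\Pi_R^{-1}(B)\in\mathcal A$ for every $B\in\mathcal A$ with $B\subseteq R$ (hence $\Pi_R^{-1}(B)=\Pi_R^{-1}(B\cap R)\in\mathcal A$ for all $B\in\mathcal A$). Axiom II: $G$ is reflexive, symmetric, and $G\circ G=G$. *)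

From Stdlib Require Import Reals.
From Coquelicot Require Import Coquelicot.
Open Scope R_scope.

Definition set (T : Type) := T -> Prop.
Definition setU {T} (A B : set T) : set T := fun x => A x \/ B x.
Definition setC {T} (A : set T) : set T := fun x => ~ A x.
Definition set0 {T} : set T := fun _ => False.
Definition setT {T} : set T := fun _ => True.
Definition disjoint {T} (A B : set T) : Prop := forall x, A x -> B x -> False.
Definition subset {T} (A B : set T) : Prop := forall x, A x -> B x.
Definition preimage {T U} (f : T -> U) (B : set U) : set T := fun x => B (f x).

Definition is_algebra {T} (A : set (set T)) : Prop :=
  A set0 /\ A setT /\
  (forall B1 B2, A B1 -> A B2 -> A (setU B1 B2)) /\
  (forall B, A B -> A (setC B)).

Definition fa_measure {T} (A : set (set T)) (mu : set T -> R) : Prop :=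
  (forall B, A B -> 0 <= mu B) /\ mu set0 = 0 /\
  (forall B1 B2, A B1 -> A B2 -> disjoint B1 B2 ->
     mu (setU B1 B2) = mu B1 + mu B2).

Definition rectangle {X} (B1 B2 : set X) : set (X * X) :=
  fun p => B1 (fst p) /\ B2 (snd p).
Definition prod_algebra {X} (A : set (set X)) : set (set (X * X)) :=
  fun C => forall (F : set (set (X * X))), is_algebra F ->
     (forall B1 B2, A B1 -> A B2 -> F (rectangle B1 B2)) -> F C.

Definition rel_comp {X} (H K : set (X * X)) : set (X * X) :=
  fun p => exists y, H (fst p, y) /\ K (y, snd p).

(* Pre-structural datum (X, A, mu, mu2, Rset, Iset, Pi, G, E0, eta);
   Pi : X -> R is encoded as Pi : X -> X with values in Rset. *)
Definition pre_structural_datum {X : Type} (A : set (set X)) (mu : set X -> R)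
  (mu2 : set (X * X) -> R) (Rset Iset : set X) (Pi : X -> X)
  (G : set (X * X)) (E0 eta : R) : Prop :=
  is_algebra A /\ fa_measure A mu /\
  fa_measure (prod_algebra A) mu2 /\
  (forall B1 B2, A B1 -> A B2 -> mu2 (rectangle B1 B2) = mu B1 * mu B2) /\
  A Rset /\ A Iset /\ disjoint Rset Iset /\
  (forall x, Rset (Pi x)) /\
  prod_algebra A G /\ 0 < E0 /\ 0 <= eta <= 1.

Definition axiom_I {X : Type} (A : set (set X)) (Rset : set X) (Pi : X -> X) :=
  (forall x, Pi (Pi x) = Pi x) /\
  (forall r, Rset r -> Pi r = r) /\
  (forall B, A B -> subset B Rset -> A (preimage Pi B)).

Definition axiom_II {X : Type} (G : set (X * X)) :=
  (forall x, G (x, x)) /\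
  (forall x y, G (x, y) -> G (y, x)) /\
  (forall p, rel_comp G G p <-> G p).

(* The space B: bounded finitely additive real set functions on A.
   Elements are represented as functions on all subsets; only their
   values on A matter. *)
Definition in_Bspace {X} (A : set (set X)) (f : set X -> R) : Prop :=
  (exists C, forall B, A B -> Rabs (f B) <= C) /\
  (forall B1 B2, A B1 -> A B2 -> disjoint B1 B2 ->
     f (setU B1 B2) = f B1 + f B2).

Definition supnorm {X} (A : set (set X)) (f : set X -> R) : R :=
  real (Lub_Rbar (fun r => exists B, A B /\ r = Rabs (f B))).

Definition T_op {X} (mu : set X -> R) (Pi : X -> X) (eta : R)
  (f : set X -> R) : set X -> R :=
  fun B => mu B + eta * f (preimage Pi B).

Definition T_iter {X} (mu : set X -> R) (Pi : X -> X) (eta : R)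
  (n : nat) (f0 : set X -> R) : set X -> R :=
  Nat.iter n (T_op mu Pi eta) f0.

(** Since [Pi] is idempotent, [Pi^-1 (Pi^-1 B) = Pi^-1 B], so the fixed-point
    equation evaluated at [Pi^-1 B] reads [f (Pi^-1 B) = mu (Pi^-1 B) + eta f (Pi^-1 B)];
    this determines [f (Pi^-1 B)] and then [f B].  Because [T_eta f - T_eta g] is
    [eta] times [f - g] composed with [Pi^-1], and the algebra is closed under
    [Pi^-1] (via [B |-> B ∩ R]), [T_eta] is an [eta]-contraction in the sup norm. *)
From Stdlib Require Import Reals Lra Classical FunctionalExtensionality PropExtensionality.
From Coquelicot Require Import Coquelicot.
Open Scope R_scope.

Lemma set_ext {T} (B1 B2 : set T) : (forall x, B1 x <-> B2 x) -> B1 = B2.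
Proof.
  intro H. extensionality x. apply propositional_extensionality, H.
Qed.

Definition setI {T} (B1 B2 : set T) : set T := fun x => B1 x /\ B2 x.

Lemma algebra_setI {T} (A : set (set T)) (B1 B2 : set T) :
  is_algebra A -> A B1 -> A B2 -> A (setI B1 B2).
Proof.
  intros [_ [_ [AU AC]]] H1 H2.
  replace (setI B1 B2) with (setC (setU (setC B1) (setC B2))).
  - apply AC, AU; apply AC; assumption.
  - apply set_ext. intro x. unfold setI, setC, setU. split.
    + intro H. split; apply NNPP; tauto.
    + tauto.
Qed.

Lemma algebra_preimage_closed {X} (A : set (set X)) (Rset : set X) (Pi : X -> X) :
  is_algebra A -> A Rset -> (forall x, Rset (Pi x)) -> axiom_I A Rset Pi ->
  forall B, A B -> A (preimage Pi B).
Proof.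
  intros HA HR HPiR [_ [_ Hpre]] B HB.
  replace (preimage Pi B) with (preimage Pi (setI B Rset)).
  - apply Hpre; [apply algebra_setI; assumption | intros x []; assumption].
  - apply set_ext. intro x. unfold preimage, setI. specialize (HPiR x). tauto.
Qed.

Lemma preimage_idem {X} (Pi : X -> X) (B : set X) :
  (forall x, Pi (Pi x) = Pi x) -> preimage Pi (preimage Pi B) = preimage Pi B.
Proof.
  intro Hidem. extensionality x. unfold preimage. rewrite Hidem. reflexivity.
Qed.

Lemma fa_measure_le_setT {X} (A : set (set X)) (mu : set X -> R) (B : set X) :
  is_algebra A -> fa_measure A mu -> A B -> mu B <= mu setT.
Proof.
  intros HA [Hmu0 [_ Hadd]] HB.
  assert (HBc : A (setC B)) by (apply HA; assumption).
  replace (@setT X) with (setU B (setC B)).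
  - rewrite Hadd by (try assumption; intros x H1 H2; exact (H2 H1)).
    pose proof (Hmu0 _ HBc). lra.
  - apply set_ext. intro x. unfold setU, setC, setT. split; [tauto | intros _; apply classic].
Qed.

Section Supnorm.

Context {X : Type}.
Variables (A : set (set X)) (h : set X -> R).

Let image_abs : R -> Prop := fun r => exists B, A B /\ r = Rabs (h B).

Lemma supnorm_le (K : R) :
  (exists B, A B) -> (forall B, A B -> Rabs (h B) <= K) -> supnorm A h <= K.
Proof.
  intros [B0 HB0] HK. unfold supnorm. fold image_abs.
  destruct (Lub_Rbar_correct image_abs) as [Hub Hlub].
  assert (Hle : Rbar_le (Lub_Rbar image_abs) K).
  { apply Hlub. intros r [B [HB ->]]. apply HK, HB. }
  assert (Hge : Rbar_le (Rabs (h B0)) (Lub_Rbar image_abs)) by (apply Hub; exists B0; auto).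
  destruct (Lub_Rbar image_abs); simpl in *; auto; contradiction.
Qed.

Lemma Rabs_le_supnorm (C : R) (B : set X) :
  (forall B, A B -> Rabs (h B) <= C) -> A B -> Rabs (h B) <= supnorm A h.
Proof.
  intros HC HB. unfold supnorm. fold image_abs.
  destruct (Lub_Rbar_correct image_abs) as [Hub Hlub].
  assert (Hle : Rbar_le (Lub_Rbar image_abs) C).
  { apply Hlub. intros r [B' [HB' ->]]. apply HC, HB'. }
  assert (Hge : Rbar_le (Rabs (h B)) (Lub_Rbar image_abs)) by (apply Hub; exists B; auto).
  destruct (Lub_Rbar image_abs); simpl in *; auto; contradiction.
Qed.

End Supnorm.

Lemma in_Bspace_sub_bounded {X} (A : set (set X)) (f g : set X -> R) :
  in_Bspace A f -> in_Bspace A g -> exists C, forall B, A B -> Rabs (f B - g B) <= C.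
Proof.
  intros [[Cf Hf] _] [[Cg Hg] _]. exists (Cf + Cg). intros B HB.
  pose proof (Rabs_triang (f B) (- g B)) as Htri. rewrite Rabs_Ropp in Htri.
  specialize (Hf B HB). specialize (Hg B HB). unfold Rminus. lra.
Qed.

Lemma is_lim_seq_geom_squeeze (u : nat -> R) (q s : R) :
  Rabs q < 1 -> (forall n, 0 <= u n <= q ^ n * s) -> is_lim_seq u 0.
Proof.
  intros Hq Hu.
  apply is_lim_seq_le_le with (u := fun _ => 0) (w := fun n => q ^ n * s).
  - exact Hu.
  - apply is_lim_seq_const.
  - replace (Finite 0) with (Rbar_mult 0 s) by (simpl; f_equal; ring).
    apply is_lim_seq_scal_r, is_lim_seq_geom, Hq.
Qed.

Section Fixed_point.

Context {X : Type}.
Variables (mu : set X -> R) (Pi : X -> X) (eta : R).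

Definition T_fixed : set X -> R :=
  fun B => mu B + eta / (1 - eta) * mu (preimage Pi B).

Hypothesis Pi_idem : forall x, Pi (Pi x) = Pi x.

Section Fixed_point_equation.

Hypothesis eta_neq1 : eta <> 1.

Lemma T_fixed_is_fixed (B : set X) : T_fixed B = T_op mu Pi eta T_fixed B.
Proof.
  unfold T_op, T_fixed. rewrite preimage_idem by exact Pi_idem.
  field. lra.
Qed.

Lemma T_op_fixed_eq_T_fixed (f : set X -> R) (B : set X) :
  f B = T_op mu Pi eta f B ->
  f (preimage Pi B) = T_op mu Pi eta f (preimage Pi B) ->
  f B = T_fixed B.
Proof.
  unfold T_op, T_fixed. rewrite preimage_idem by exact Pi_idem.
  intros HB Hpre.
  assert (Hval : f (preimage Pi B) = mu (preimage Pi B) / (1 - eta)).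
  { field_simplify_eq; lra. }
  rewrite HB, Hval. field. lra.
Qed.

End Fixed_point_equation.

Lemma T_op_sub (f g : set X -> R) (B : set X) :
  T_op mu Pi eta f B - T_op mu Pi eta g B = eta * (f (preimage Pi B) - g (preimage Pi B)).
Proof. unfold T_op. ring. Qed.

Variable A : set (set X).
Hypothesis A_preimage : forall B, A B -> A (preimage Pi B).

Lemma T_iter_dist_le (f0 g : set X -> R) (s : R) :
  0 <= eta ->
  (forall B, A B -> g B = T_op mu Pi eta g B) ->
  (forall B, A B -> Rabs (f0 B - g B) <= s) ->
  forall n B, A B -> Rabs (T_iter mu Pi eta n f0 B - g B) <= eta ^ n * s.
Proof.
  intros Heta Hg Hf0 n. induction n as [|n IH]; intros B HB.
  - simpl. rewrite Rmult_1_l. apply Hf0, HB.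
  - change (T_iter mu Pi eta (S n) f0 B) with (T_op mu Pi eta (T_iter mu Pi eta n f0) B).
    rewrite (Hg B HB), T_op_sub, Rabs_mult, Rabs_right by lra.
    simpl. rewrite Rmult_assoc.
    apply Rmult_le_compat_l; [exact Heta | apply IH, A_preimage, HB].
Qed.

Hypothesis A_algebra : is_algebra A.
Hypothesis mu_measure : fa_measure A mu.
Hypothesis eta_range : 0 <= eta < 1.

Lemma T_fixed_nonneg (B : set X) : A B -> 0 <= T_fixed B.
Proof.
  intro HB. destruct mu_measure as [Hmu0 _]. unfold T_fixed.
  assert (Hcoef : 0 <= eta / (1 - eta)) by (apply Rdiv_le_0_compat; lra).
  apply Rplus_le_le_0_compat; [| apply Rmult_le_pos]; auto.
Qed.

Lemma T_fixed_le (B : set X) : A B -> T_fixed B <= mu setT / (1 - eta).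
Proof.
  intro HB. unfold T_fixed.
  pose proof (fa_measure_le_setT _ _ _ A_algebra mu_measure HB).
  pose proof (fa_measure_le_setT _ _ _ A_algebra mu_measure (A_preimage _ HB)).
  assert (0 <= eta / (1 - eta)) by (apply Rdiv_le_0_compat; lra).
  replace (mu setT / (1 - eta)) with (mu setT + eta / (1 - eta) * mu setT) by (field; lra).
  apply Rplus_le_compat; [assumption | apply Rmult_le_compat_l; assumption].
Qed.

Lemma T_fixed_in_Bspace : in_Bspace A T_fixed.
Proof.
  split.
  - exists (mu setT / (1 - eta)). intros B HB.
    rewrite Rabs_right by (apply Rle_ge, T_fixed_nonneg, HB). apply T_fixed_le, HB.
  - intros B1 B2 H1 H2 Hdisj. destruct mu_measure as [_ [_ Hadd]]. unfold T_fixed.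
    change (preimage Pi (setU B1 B2)) with (setU (preimage Pi B1) (preimage Pi B2)).
    assert (Hdisj_pre : disjoint (preimage Pi B1) (preimage Pi B2)) by (intro x; apply Hdisj).
    rewrite !Hadd by auto. ring.
Qed.

Section Iterates.

Variable f0 : set X -> R.
Hypothesis f0_in_Bspace : in_Bspace A f0.

Let dist n : set X -> R := fun B => T_iter mu Pi eta n f0 B - T_fixed B.

Lemma Rabs_T_iter_dist_le n B :
  A B -> Rabs (dist n B) <= eta ^ n * supnorm A (dist 0).
Proof.
  destruct (in_Bspace_sub_bounded A f0 _ f0_in_Bspace T_fixed_in_Bspace) as [C HC].
  apply T_iter_dist_le; [tauto | intros B' _ | intros B' HB'].
  - apply T_fixed_is_fixed; lra.
  - exact (Rabs_le_supnorm A (dist 0) C B' HC HB').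
Qed.

Lemma T_iter_supnorm_le n : supnorm A (dist n) <= eta ^ n * supnorm A (dist 0).
Proof.
  apply supnorm_le; [exists set0; apply A_algebra | apply Rabs_T_iter_dist_le].
Qed.

Lemma T_iter_supnorm_cvg : is_lim_seq (fun n => supnorm A (dist n)) 0.
Proof.
  apply is_lim_seq_geom_squeeze with eta (supnorm A (dist 0)).
  - rewrite Rabs_right; lra.
  - intro n. split; [| apply T_iter_supnorm_le].
    apply Rle_trans with (Rabs (dist n set0)); [apply Rabs_pos |].
    apply (Rabs_le_supnorm A _ _ set0 (Rabs_T_iter_dist_le n)), A_algebra.
Qed.

End Iterates.

End Fixed_point.

Theorem theorem4p8 (X : Type) (x0 : X) (A : set (set X)) (mu : set X -> R)
  (mu2 : set (X * X) -> R) (Rset Iset : set X) (Pi : X -> X)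
  (G : set (X * X)) (E0 eta M : R) :
  pre_structural_datum A mu mu2 Rset Iset Pi G E0 eta ->
  axiom_I A Rset Pi -> axiom_II G ->
  mu setT <= M -> 0 <= eta < 1 ->
  let fstar : set X -> R :=
    fun B => mu B + eta / (1 - eta) * mu (preimage Pi B) in
  (* existence: f_* lies in B and is a fixed point of T_eta *)
  (in_Bspace A fstar /\ (forall B, A B -> fstar B = T_op mu Pi eta fstar B)) /\
  (* uniqueness in B *)
  (forall f, in_Bspace A f ->
     (forall B, A B -> f B = T_op mu Pi eta f B) ->
     forall B, A B -> f B = fstar B) /\
  (* nonnegativity *)
  (forall B, A B -> 0 <= fstar B) /\
  (* geometric convergence of the iterates *)
  (forall f0, in_Bspace A f0 ->
     (forall n, supnorm A (fun B => T_iter mu Pi eta n f0 B - fstar B)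
                <= eta ^ n * supnorm A (fun B => f0 B - fstar B)) /\
     is_lim_seq (fun n => supnorm A (fun B => T_iter mu Pi eta n f0 B - fstar B)) 0).
Proof.
  intros HD HI _ _ Heta fstar. change fstar with (T_fixed mu Pi eta).
  destruct HD as [HA [Hmu [_ [_ [HR [_ [_ [HPiR _]]]]]]]].
  pose proof (algebra_preimage_closed A Rset Pi HA HR HPiR HI) as Hpre.
  destruct HI as [Hidem _].
  assert (Heta1 : eta <> 1) by lra.
  pose proof (T_fixed_in_Bspace mu Pi eta A Hpre HA Hmu Heta) as Hfs.
  split; [split | split; [| split]].
  - exact Hfs.
  - intros B _. apply T_fixed_is_fixed; assumption.
  - intros f _ Hf B HB. apply T_op_fixed_eq_T_fixed; auto.
  - intros B HB. apply (T_fixed_nonneg mu Pi eta A); assumption.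
  - intros f0 Hf0. split.
    + exact (T_iter_supnorm_le mu Pi eta Hidem A Hpre HA Hmu Heta f0 Hf0).
    + exact (T_iter_supnorm_cvg mu Pi eta Hidem A Hpre HA Hmu Heta f0 Hf0).
Qed.
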